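(* Let $n\ge 2$ and let $g^K\in\mathcal{G}^K_{n,C}$ be a ranked labeled tree on the leaf set $[n]=\{1,\dots,n\}$ that is compatible with a given Kingman perfect phylogeny $\mathcal{T}^K$. For $i=1,\dots,n-1$, let $g^K_{i,1}$ and $g^K_{i,2}$ be the two subtrees (clades) of $g^K$ that are merged at the $i$-th coalescent event (i.e. the two child subtrees of the internal node of rank $i$), and let $|g^K_{i,j}|$ denote the number of leaves of $g^K_{i,j}$. Let $c^{LT}(g^K)$ be the number of ranked labeled trees $g'^K\in\mathcal{G}^K_{n,C}$ with $LT(g'^K)=LT(g^K)$. Then $$c^{LT}(g^K)=\prod_{i=1}^{n-1}\frac{(|g^K_{i,1}|+|g^K_{i,2}|-2)!}{(|g^K_{i,1}|-1)!\,(|g^K_{i,2}|-1)!}.$$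
   Context: A ranked labeled tree on $[n]$ is a rooted binary tree with $n$ leaves bijectively labeled by $[n]$, together with a ranking of its $n-1$ internal nodes, i.e. a bijection from internal nodes to $\{1,\dots,n-1\}$ such that every internal node has smaller rank than its parent (rank $i$ = the $i$-th coalescence, read from the leaves to the root). Two ranked labeled trees are equal if there is a leaf-label-preserving and rank-preserving isomorphism between them. For a ranked labeled tree $g^K$, $LT(g^K)$ denotes the unranked labeled tree obtained by forgetting the ranking. A Kingman perfect phylogeny $\mathcal{T}^K$ is a rooted (possibly multifurcating) tree in which each node $v$ carries a (possibly empty) set of individual labels, these sets being pairwise disjoint with union $[n]$. For a node $v$, let $D(v)$ be the union of the label sets of all nodes in the subtree of $\mathcal{T}^K$ rooted at $v$. A ranked labeled tree $g^K$ on $[n]$ is compatible with $\mathcal{T}^K$ if for every node $v$ of $\mathcal{T}^K$ with $D(v)\neq\emptyset$, the set $D(v)$ is exactly the leaf set of some subtree (clade) of $g^K$. $\mathcal{G}^K_{n,C}$ denotes the set of ranked labeled trees on $[n]$ compatible with $\mathcal{T}^K$. *)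

From mathcomp Require Import all_boot.
Set Implicit Arguments. Unset Strict Implicit. Unset Printing Implicit Defensive.

(* Binary trees whose leaves carry a label and whose internal nodes carry a rank. *)
Inductive rtree : Type :=
| Leaf of nat
| Node of nat & rtree & rtree.

Fixpoint leaves (t : rtree) : seq nat :=
  match t with Leaf l => [:: l] | Node _ a b => leaves a ++ leaves b end.

Fixpoint ranks (t : rtree) : seq nat :=
  match t with Leaf _ => [::] | Node r a b => r :: ranks a ++ ranks b end.

Definition child_ok (r : nat) (c : rtree) : bool :=
  if c is Node r' _ _ then r' < r else true.

Fixpoint rank_ok (t : rtree) : bool :=
  match t with
  | Leaf _ => true
  | Node r a b => [&& child_ok r a, child_ok r b, rank_ok a & rank_ok b]
  end.

Definition ranked_labeled_tree (n : nat) (t : rtree) : Prop :=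
  perm_eq (leaves t) (iota 1 n) /\ perm_eq (ranks t) (iota 1 n.-1) /\ rank_ok t.

Fixpoint riso (t u : rtree) : bool :=
  match t, u with
  | Leaf a, Leaf b => a == b
  | Node r a1 a2, Node s b1 b2 =>
      (r == s) && ((riso a1 b1 && riso a2 b2) || (riso a1 b2 && riso a2 b1))
  | _, _ => false
  end.

(* leaf-label-preserving isomorphism ignoring ranks: LT t = LT u *)
Fixpoint ltiso (t u : rtree) : bool :=
  match t, u with
  | Leaf a, Leaf b => a == b
  | Node _ a1 a2, Node _ b1 b2 =>
      (ltiso a1 b1 && ltiso a2 b2) || (ltiso a1 b2 && ltiso a2 b1)
  | _, _ => false
  end.

Fixpoint clades (t : rtree) : seq (seq nat) :=
  leaves t :: match t with Leaf _ => [::] | Node _ a b => clades a ++ clades b end.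

(* Kingman perfect phylogeny: rooted multifurcating tree, each node carries a
   (possibly empty) list of individual labels. *)
Inductive ptree : Type := PNode of seq nat & seq ptree.

Fixpoint pD (t : ptree) : seq nat :=
  match t with PNode ls cs => ls ++ flatten (map pD cs) end.

Fixpoint pDs (t : ptree) : seq (seq nat) :=
  match t with PNode ls cs => pD (PNode ls cs) :: flatten (map pDs cs) end.

(* label sets pairwise disjoint (and duplicate free) with union [n] *)
Definition kingman_pp (n : nat) (T : ptree) : Prop := perm_eq (pD T) (iota 1 n).

Definition compatible (T : ptree) (g : rtree) : Prop :=
  forall D, D \in pDs T -> D != [::] -> exists2 c, c \in clades g & c =i D.

Definition GKnC (n : nat) (T : ptree) (g : rtree) : Prop :=
  ranked_labeled_tree n g /\ compatible T g.

(* list membership (rtree has no eqType structure here) *)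
Fixpoint tree_in (t : rtree) (l : seq rtree) : Prop :=
  if l is u :: l' then u = t \/ tree_in t l' else False.

(* the number of ranked labeled trees (up to equality, i.e. riso) satisfying P
   is k: there is a list of k pairwise distinct such trees covering all of them *)
Definition num_trees (P : rtree -> Prop) (k : nat) : Prop :=
  exists l : seq rtree,
    [/\ size l = k, forall t, tree_in t l -> P t,
        pairwise (fun a b => ~~ riso a b) l &
        forall t, P t -> exists2 u, tree_in u l & riso t u].

Fixpoint child_sizes (i : nat) (t : rtree) : option (nat * nat) :=
  match t with
  | Leaf _ => None
  | Node r a b =>
      if r == i then Some (size (leaves a), size (leaves b))
      else if child_sizes i a is Some p then Some p else child_sizes i b
  end.

From HB Require Import structures.
From mathcomp Require Import all_boot all_order all_algebra.
Import GRing.Theory Num.Theory.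
Set Implicit Arguments. Unset Strict Implicit. Unset Printing Implicit Defensive.

(* A ranked tree with a prescribed unranked shape is determined by how the
   ranks are distributed over the internal nodes.  The root must carry the
   largest available rank, and the remaining ranks may be split arbitrarily
   between the two subtrees, as a subset of the size dictated by the left
   subtree.  Hence a node whose subtrees have k1 and k2 leaves contributes the
   factor C(k1 + k2 - 2, k1 - 1), and the count is the product of these factors
   over all internal nodes.  Compatibility with the perfect phylogeny only
   depends on the clades of the tree, which re-ranking does not change. *)

Definition rtree_eq_dec (a b : rtree) : {a = b} + {a <> b}.
Proof. decide equality; exact: (fun x y : nat => decP (@eqP _ x y)). Defined.

HB.instance Definition _ := comparableMixin rtree_eq_dec.

Lemma tree_inP t l : tree_in t l <-> t \in l.
Proof.
elim: l => [|u l IH] //=; rewrite in_cons; split.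
  by case=> [->|/IH ->]; rewrite ?eqxx ?orbT.
by case/orP=> [/eqP->|/IH]; [left|right].
Qed.

Section CountingUpToEquivalence.

Variables (T : eqType) (e : rel T).
Hypotheses (e_refl : reflexive e) (e_sym : symmetric e) (e_trans : transitive e).

Definition injective_up_to (s : seq T) := {in s &, forall x y, e x y -> x = y}.

Lemma pairwise_nrel_uniq (s : seq T) :
  pairwise (fun x y => ~~ e x y) s -> uniq s /\ injective_up_to s.
Proof.
elim: s => [|x s IH] //= /andP[/allP xs /IH[us inj]]; split.
  by rewrite us andbT; apply/negP=> /xs; rewrite e_refl.
move=> y z; rewrite !in_cons => /orP[/eqP->|ys] /orP[/eqP->|zs] exz //.
- by move: (xs _ zs); rewrite exz.
- by move: (xs _ ys); rewrite e_sym exz.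
- exact: inj.
Qed.

Lemma size_le_up_to (A B : seq T) : uniq A -> injective_up_to A ->
  (forall x, x \in A -> has (e x) B) -> size A <= size B.
Proof.
move=> uA injA coverA; pose idx x := find (e x) B.
have idx_uniq : uniq (map idx A).
  rewrite map_inj_in_uniq // => x y xA yA idx_xy; apply: injA => //.
  have ex := nth_find x (coverA x xA); have ey := nth_find x (coverA y yA).
  by rewrite -/(idx x) idx_xy in ex; rewrite e_sym in ey; apply: e_trans ey.
rewrite -(size_map idx) -(size_iota 0 (size B)); apply: uniq_leq_size => //.
by move=> _ /mapP[x xA ->]; rewrite mem_iota add0n -has_find coverA.
Qed.

Lemma size_eq_up_to (A B : seq T) :
  uniq A -> injective_up_to A -> uniq B -> injective_up_to B ->
  (forall x, x \in A -> has (e x) B) -> (forall y, y \in B -> has (e y) A) ->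
  size A = size B.
Proof.
by move=> uA iA uB iB AB BA; apply/eqP; rewrite eqn_leq !size_le_up_to.
Qed.

End CountingUpToEquivalence.

Section FlattenMap.

Variables (T U : eqType) (f : T -> seq U).

Lemma uniq_flatten_map (s : seq T) :
  uniq s -> (forall x, x \in s -> uniq (f x)) ->
  (forall x y z, x \in s -> y \in s -> z \in f x -> z \in f y -> x = y) ->
  uniq (flatten (map f s)).
Proof.
elim: s => [|x s IH] //= /andP[xs us] uf disj.
rewrite cat_uniq uf ?mem_head // IH //; last 2 first.
- by move=> y ys; apply: uf; rewrite in_cons ys orbT.
- by move=> y y' z ys y's; apply: disj; rewrite in_cons ?ys ?y's orbT.
rewrite andbT; apply/hasPn=> z /flatten_mapP[y ys zy]; apply/negP=> zx.
have exy : x = y by apply: (disj x y z) => //; rewrite in_cons ?eqxx ?ys ?orbT.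
by move: xs; rewrite exy ys.
Qed.

Lemma size_flatten_map_const (s : seq T) k :
  (forall x, x \in s -> size (f x) = k) -> size (flatten (map f s)) = size s * k.
Proof.
elim: s => [|x s IH] //= fk; rewrite size_cat fk ?mem_head // IH ?mulSn //.
by move=> y ys; apply: fk; rewrite in_cons ys orbT.
Qed.

End FlattenMap.

Fixpoint splits (k : nat) (s : seq nat) : seq (seq nat * seq nat) :=
  match s with
  | [::] => if k is 0 then [:: ([::], [::])] else [::]
  | x :: s' => (if k is k'.+1 then [seq (x :: p.1, p.2) | p <- splits k' s'] else [::])
               ++ [seq (p.1, x :: p.2) | p <- splits k s']
  end.

Lemma size_splits k s : size (splits k s) = 'C(size s, k).
Proof.
elim: s k => [|x s IH] [|k] //=; first by rewrite size_map IH !bin0.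
by rewrite size_cat !size_map !IH binS addnC.
Qed.

Lemma mem_splits k s p : p \in splits k s -> perm_eq (p.1 ++ p.2) s /\ size p.1 = k.
Proof.
elim: s k p => [|x s IH] k p /=.
  by case: k => //; rewrite inE => /eqP->.
rewrite mem_cat => /orP[].
  by case: k => // k /mapP[q /IH[P S] ->] /=; rewrite perm_cons S.
case/mapP=> [q /IH[P S] ->] /=; split=> //.
by rewrite -(perm_catCA [:: x]) perm_cons.
Qed.

Lemma splits_sizes k s p : p \in splits k s -> size p.1 = k /\ size p.2 = size s - k.
Proof.
by case/mem_splits=> /perm_size; rewrite size_cat => <- <-; rewrite addKn.
Qed.

Lemma splits_uniq_parts k s p : uniq s -> p \in splits k s -> uniq p.1 /\ uniq p.2.
Proof.
by move=> us /mem_splits[/perm_uniq]; rewrite us cat_uniq => /and3P[].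
Qed.

Lemma splits_complete s A B : perm_eq s (A ++ B) ->
  exists2 p, p \in splits (size A) s & perm_eq p.1 A /\ perm_eq p.2 B.
Proof.
elim: s A B => [|x s IH] A B /=.
  move/perm_size; rewrite size_cat; case: A => //; case: B => // _.
  by exists ([::], [::]); rewrite ?inE.
move=> P; have : x \in A ++ B by rewrite -(perm_mem P) mem_head.
rewrite mem_cat => /orP[xA|xB].
  have PA := perm_to_rem xA.
  have : perm_eq s (rem x A ++ B).
    by rewrite -(perm_cons x); apply: (perm_trans P); rewrite -cat_cons perm_cat2r.
  case/IH=> q qin [q1 q2]; exists (x :: q.1, q.2); last first.
    by split=> //; rewrite perm_sym (perm_trans PA) // perm_cons perm_sym.
  by rewrite (perm_size PA) /= mem_cat (map_f (fun p => (x :: p.1, p.2)) qin).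
have PB := perm_to_rem xB.
have : perm_eq s (A ++ rem x B).
  rewrite -(perm_cons x); apply: (perm_trans P).
  by rewrite perm_sym -cat1s perm_catCA perm_cat2l perm_sym perm_to_rem.
case/IH=> q qin [q1 q2]; exists (q.1, x :: q.2); last first.
  by split=> //; rewrite perm_sym (perm_trans PB) // perm_cons perm_sym.
by rewrite mem_cat (map_f (fun p => (p.1, x :: p.2)) qin) orbT.
Qed.

Lemma notin_splits_fst x k s p : x \notin s -> p \in splits k s -> x \notin p.1.
Proof.
move=> xs /mem_splits[P _]; apply: contra xs => xp.
by rewrite -(perm_mem P) mem_cat xp.
Qed.

Lemma splits_inj k s p q : uniq s -> p \in splits k s -> q \in splits k s ->
  perm_eq p.1 q.1 -> p = q.
Proof.
elim: s k p q => [|x s IH] k p q /=.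
  by case: k => //; rewrite !inE => _ /eqP-> /eqP->.
case/andP=> xs us; rewrite !mem_cat; case: k => [|k] /=.
  by move=> /mapP[p' pin ->] /mapP[q' qin ->] /= E; rewrite (IH 0 p' q').
case/orP=> /mapP[p' pin ->]; case/orP=> /mapP[q' qin ->] /= E.
- by rewrite (IH k p' q') // -(perm_cons x).
- by have := notin_splits_fst xs qin; rewrite -(perm_mem E) mem_head.
- by have := notin_splits_fst xs pin; rewrite (perm_mem E) mem_head.
- by rewrite (IH k.+1 p' q').
Qed.

Lemma splits_uniq k s : uniq s -> uniq (splits k s).
Proof.
elim: s k => [|x s IH] k /=; first by case: k.
case/andP=> xs us.
have inj2 : injective (fun p : seq nat * seq nat => (p.1, x :: p.2)).
  by move=> [a b] [c d] /= [-> ->].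
case: k => [|k] /=; first by rewrite map_inj_uniq // IH.
rewrite cat_uniq !map_inj_uniq ?IH //; last by move=> [a b] [c d] /= [-> ->].
rewrite andbT; apply/hasPn=> z /mapP[q qin ->] /=; apply/negP=> /mapP[p pin [E _]].
by have := notin_splits_fst xs qin; rewrite E mem_head.
Qed.

Definition seqmax (s : seq nat) := foldr maxn 0 s.

Lemma leq_seqmax x s : x \in s -> x <= seqmax s.
Proof.
elim: s => [|y s IH] //=; rewrite in_cons => /orP[/eqP->|/IH h].
  by rewrite leq_maxl.
by rewrite (leq_trans h) // leq_maxr.
Qed.

Lemma seqmax_mem s : s != [::] -> seqmax s \in s.
Proof.
elim: s => [|y [|z s] IH] // _; first by rewrite /= maxn0 mem_head.
rewrite [seqmax _]/= -/(seqmax (z :: s)) in_cons.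
by case: (leqP y (seqmax (z :: s))) => _; rewrite ?IH ?orbT ?eqxx.
Qed.

Lemma mem_rem_seqmax_lt S q : uniq S -> q \in rem (seqmax S) S -> q < seqmax S.
Proof.
move=> uS; rewrite (mem_rem_uniq _ uS) inE => /andP[ne qS].
by rewrite ltn_neqAle ne leq_seqmax.
Qed.

Lemma riso_refl : reflexive riso.
Proof. by elim=> [l|r a IHa b IHb] /=; rewrite ?eqxx ?IHa ?IHb. Qed.

Lemma riso_symI a b : riso a b -> riso b a.
Proof.
elim: a b => [l|r a1 IH1 a2 IH2] [l'|r' b1 b2] //=; first by move/eqP->.
case/andP=> /eqP-> /orP[]/andP[h1 h2]; rewrite eqxx (IH1 _ h1) (IH2 _ h2) //.
by rewrite orbT.
Qed.

Lemma riso_sym : symmetric riso.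
Proof. by move=> a b; apply/idP/idP; apply: riso_symI. Qed.

Lemma riso_trans : transitive riso.
Proof.
move=> b a c; elim: a b c => [l|r a1 IH1 a2 IH2] [l'|r' b1 b2] [l''|r'' c1 c2] //=.
  by move=> /eqP-> /eqP->.
case/andP=> /eqP-> H1 /andP[/eqP-> H2]; rewrite eqxx /=.
case/orP: H1 => /andP[h1 h2]; case/orP: H2 => /andP[k1 k2].
- by rewrite (IH1 _ _ h1 k1) (IH2 _ _ h2 k2).
- by rewrite (IH1 _ _ h1 k1) (IH2 _ _ h2 k2) orbT.
- by rewrite (IH1 _ _ h1 k2) (IH2 _ _ h2 k1) orbT.
- by rewrite (IH1 _ _ h1 k2) (IH2 _ _ h2 k1).
Qed.

Lemma riso_perm_leaves a b : riso a b -> perm_eq (leaves a) (leaves b).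
Proof.
elim: a b => [l|r a1 IH1 a2 IH2] [l'|r' b1 b2] //=; first by move/eqP->.
case/andP=> _ /orP[]/andP[/IH1 h1 /IH2 h2]; first by rewrite perm_cat.
by rewrite perm_sym -perm_catC perm_cat // perm_sym.
Qed.

Lemma leaves_neq0 t : leaves t != [::].
Proof. by elim: t => [l|r a IHa b IHb] //=; case: (leaves a) IHa. Qed.

(* With distinct leaf labels the leaf sequence fixes the order of the children,
   so the swapped case of [riso] cannot occur. *)
Lemma riso_eq a b : uniq (leaves a) -> leaves a = leaves b -> riso a b -> a = b.
Proof.
elim: a b => [l|r a1 IH1 a2 IH2] [l'|r' b1 b2] //=; first by move=> _ _ /eqP->.
move=> U E /andP[/eqP<- /orP[]/andP[h1 h2]].
  have s1 := perm_size (riso_perm_leaves h1).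
  move/eqP: E; rewrite eqseq_cat // => /andP[/eqP e1 /eqP e2].
  by move: U; rewrite cat_uniq => /and3P[u1 _ u2]; rewrite (IH1 b1) // (IH2 b2).
move: U; rewrite E cat_uniq => /and3P[_ /hasPn D _]; exfalso.
move: E (leaves_neq0 a1) (leaves_neq0 b1) (riso_perm_leaves h1) D.
case: (leaves a1) => // x s1; case: (leaves b1) => // y s2 [<- _] _ _ p1 D.
have : x \in leaves b2 by rewrite -(perm_mem p1) mem_head.
by move/D; rewrite mem_head.
Qed.

Lemma size_leaves t : size (leaves t) = (size (ranks t)).+1.
Proof. by elim: t => [l|r a IHa b IHb] //=; rewrite !size_cat IHa IHb addnS. Qed.

Lemma ltiso_size_ranks u t : ltiso u t -> size (ranks u) = size (ranks t).
Proof.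
elim: u t => [l|r a IHa b IHb] [l'|r' c d] //= /orP[]/andP[/IHa h1 /IHb h2];
  by rewrite !size_cat h1 h2 // addnC.
Qed.

Lemma rank_ok_child_lt r a : rank_ok a -> child_ok r a -> {in ranks a, forall q, q < r}.
Proof.
elim: a r => [l|r' a IHa b IHb] r //= /and4P[ca cb oa ob] lt q.
rewrite in_cons mem_cat => /orP[/eqP->//|/orP[qa|qb]]; apply: ltn_trans lt.
  exact: IHa.
exact: IHb.
Qed.

Lemma child_ok_lt r a : {in ranks a, forall q, q < r} -> child_ok r a.
Proof. by case: a => //= r' a b; apply; rewrite mem_head. Qed.

Lemma rank_ok_root_max r x y S : rank_ok (Node r x y) ->
  perm_eq (ranks (Node r x y)) S -> seqmax S = r.
Proof.
move=> /and4P[cx cy ox oy] P; have rS : r \in S by rewrite -(perm_mem P) mem_head.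
apply/eqP; rewrite eqn_leq leq_seqmax // andbT.
have Sn : S != [::] by case: (S) rS.
have := seqmax_mem Sn; rewrite -(perm_mem P) /= in_cons mem_cat.
case/orP=> [/eqP->//|/orP[h|h]]; rewrite ltnW //.
  exact: (rank_ok_child_lt ox cx).
exact: (rank_ok_child_lt oy cy).
Qed.

Fixpoint rankings (t : rtree) (S : seq nat) : seq rtree :=
  match t with
  | Leaf l => [:: Leaf l]
  | Node _ a b =>
     flatten [seq [seq Node (seqmax S) x y | x <- rankings a p.1, y <- rankings b p.2]
             | p <- splits (size (ranks a)) (rem (seqmax S) S)]
  end.

Lemma rankings_NodeP r a b S u : u \in rankings (Node r a b) S ->
  exists p, exists x, exists y,
   [/\ p \in splits (size (ranks a)) (rem (seqmax S) S), x \in rankings a p.1,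
       y \in rankings b p.2 & u = Node (seqmax S) x y].
Proof.
move=> /flatten_mapP[p pin /allpairsP[[x y] [/= xin yin ->]]].
by exists p, x, y.
Qed.

Lemma mem_rankings_Node r a b S p x y :
  p \in splits (size (ranks a)) (rem (seqmax S) S) ->
  x \in rankings a p.1 -> y \in rankings b p.2 ->
  Node (seqmax S) x y \in rankings (Node r a b) S.
Proof.
move=> pin xin yin; apply/flatten_mapP; exists p => //.
exact: allpairs_f.
Qed.

Lemma rankings_split_sizes r a b S p : size S = size (ranks (Node r a b)) ->
  p \in splits (size (ranks a)) (rem (seqmax S) S) ->
  size p.1 = size (ranks a) /\ size p.2 = size (ranks b).
Proof.
move=> SS /splits_sizes[-> ->]; split=> //.
have Sn : S != [::] by case: (S) SS.
by rewrite size_rem ?seqmax_mem // SS /= size_cat addKn.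
Qed.

Lemma rankings_sound t S u : uniq S -> size S = size (ranks t) -> u \in rankings t S ->
  [/\ perm_eq (ranks u) S, rank_ok u, leaves u = leaves t, clades u = clades t
    & ltiso u t].
Proof.
elim: t S u => [l|r a IHa b IHb] S u uS sizeS.
  by rewrite inE => /eqP->; case: S sizeS uS => //= _ _; rewrite ?eqxx.
case/rankings_NodeP=> p [x [y [pin xin yin ->]]].
have [s1 s2] := rankings_split_sizes sizeS pin.
have [u1 u2] := splits_uniq_parts (rem_uniq _ uS) pin.
have lt_max q : q \in p.1 ++ p.2 -> q < seqmax S.
  by rewrite (perm_mem (proj1 (mem_splits pin))); apply: mem_rem_seqmax_lt.
have [Px ox lx cx ix] := IHa _ _ u1 s1 xin.
have [Py oy ly cy iy] := IHb _ _ u2 s2 yin.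
split=> /=; rewrite ?lx ?ly ?cx ?cy ?ix ?iy //.
- have Sn : S != [::] by case: (S) sizeS.
  rewrite perm_sym (perm_trans (perm_to_rem (seqmax_mem Sn))) // perm_cons.
  have [P12 _] := mem_splits pin; rewrite perm_sym in P12.
  by apply: perm_trans P12 _; rewrite perm_cat // perm_sym.
rewrite ox oy !andbT; apply/andP; split; apply: child_ok_lt => q.
  by rewrite (perm_mem Px) => h; apply: lt_max; rewrite mem_cat h.
by rewrite (perm_mem Py) => h; apply: lt_max; rewrite mem_cat h orbT.
Qed.

Lemma rankings_complete t u S : ltiso u t -> perm_eq (ranks u) S -> rank_ok u ->
  exists2 v, v \in rankings t S & riso u v.
Proof.
elim: t u S => [l|r a IHa b IHb] [l'|r' x y] S //=.
  by move=> /eqP-> _ _; exists (Leaf l); rewrite ?mem_head //= eqxx.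
have aligned x' y' : ltiso x' a -> ltiso y' b -> perm_eq (ranks (Node r' x' y')) S ->
    rank_ok (Node r' x' y') -> exists2 v, v \in rankings (Node r a b) S & riso (Node r' x' y') v.
  move=> ha hb P O; have emax := rank_ok_root_max O P.
  move: O P => /= /and4P[_ _ ox oy] P.
  have PR : perm_eq (rem (seqmax S) S) (ranks x' ++ ranks y').
    have Sn : S != [::] by case: (S) (perm_size P).
    by rewrite emax -(perm_cons r') perm_sym (perm_trans P) // perm_to_rem // -emax seqmax_mem.
  have [p pin [p1 p2]] := splits_complete PR; rewrite (ltiso_size_ranks ha) in pin.
  rewrite perm_sym in p1; rewrite perm_sym in p2.
  have [v1 v1in r1] := IHa x' p.1 ha p1 ox.
  have [v2 v2in r2] := IHb y' p.2 hb p2 oy.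
  exists (Node (seqmax S) v1 v2); first exact: mem_rankings_Node pin v1in v2in.
  by rewrite /= emax eqxx r1 r2.
case/orP=> /andP[hx hy] P O; first exact: aligned.
have [||v vin rv] := aligned y x hy hx.
- by apply: perm_trans P; rewrite perm_cons perm_catC.
- by move: O => /= /and4P[-> -> -> ->].
exists v => //; change (riso (Node r' x y) v); apply: riso_trans rv.
by rewrite /= eqxx !riso_refl orbT.
Qed.

Lemma rankings_uniq t S : uniq S -> size S = size (ranks t) -> uniq (rankings t S).
Proof.
elim: t S => [l|r a IHa b IHb] S uS sizeS //=.
have uS' := rem_uniq (seqmax S) uS.
apply: uniq_flatten_map; first exact: splits_uniq.
  move=> p pin; have [s1 s2] := rankings_split_sizes sizeS pin.
  have [u1 u2] := splits_uniq_parts uS' pin.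
  by rewrite allpairs_uniq ?IHa ?IHb // => -[x1 y1] [x2 y2] _ _ [-> ->].
move=> p q z pin qin /allpairsP[[x y] [/= xin _ ->]] /allpairsP[[x' y'] [/= xin' _ [ex _]]].
apply: (splits_inj uS' pin qin).
have [s1 _] := rankings_split_sizes sizeS pin; have [s1' _] := rankings_split_sizes sizeS qin.
have [u1 _] := splits_uniq_parts uS' pin; have [u1' _] := splits_uniq_parts uS' qin.
have [Px _ _ _ _] := rankings_sound u1 s1 xin.
have [Px' _ _ _ _] := rankings_sound u1' s1' xin'.
by rewrite perm_sym ex in Px; apply: perm_trans Px Px'.
Qed.

Fixpoint nrankings (t : rtree) : nat :=
  match t with
  | Leaf _ => 1
  | Node _ a b => 'C(size (ranks a) + size (ranks b), size (ranks a)) * nrankings a * nrankings b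
  end.

Lemma size_rankings t S : size S = size (ranks t) -> size (rankings t S) = nrankings t.
Proof.
elim: t S => [l|r a IHa b IHb] S sizeS //=.
rewrite (@size_flatten_map_const _ _ _ _ (nrankings a * nrankings b)); last first.
  move=> p pin; have [s1 s2] := rankings_split_sizes sizeS pin.
  by rewrite size_allpairs IHa // IHb.
have Sn : S != [::] by case: (S) sizeS.
by rewrite size_splits size_rem ?seqmax_mem // sizeS /= size_cat mulnA.
Qed.

Lemma child_sizes_notin i t : i \notin ranks t -> child_sizes i t = None.
Proof.
elim: t => [l|r a IHa b IHb] //=; rewrite in_cons mem_cat negb_or.
by case/andP=> ne /norP[na nb]; rewrite eq_sym (negbTE ne) IHa // IHb.
Qed.

Lemma child_sizes_in i t : i \in ranks t -> exists p, child_sizes i t = Some p.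
Proof.
elim: t => [l|r a IHa b IHb] //=; rewrite in_cons mem_cat eq_sym.
case: (r == i) => /=; first by eexists.
case/orP=> [/IHa [p ->]|/IHb [p ->]]; first by eexists.
by case: (child_sizes i a); eexists.
Qed.

Local Open Scope ring_scope.

Definition coalescence_factor (p : nat * nat) : rat :=
  ((p.1 + p.2 - 2)`!)%:R / (((p.1 - 1)`!)%:R * ((p.2 - 1)`!)%:R).

Lemma coalescence_factor_bin k1 k2 :
  coalescence_factor (k1.+1, k2.+1) = ('C(k1 + k2, k1))%:R.
Proof.
rewrite /coalescence_factor /= !subn1 addSn addnS subn2 /=.
have := bin_fact (leq_addr k2 k1); rewrite addKn => <-.
rewrite [X in X / _]natrM -[X in _ / X]natrM mulfK //.
by rewrite pnatr_eq0 -lt0n muln_gt0 !fact_gt0.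
Qed.

Lemma prod_coalescence_factor t : uniq (ranks t) ->
  \prod_(i <- ranks t) coalescence_factor (odflt (1%N, 1%N) (child_sizes i t))
  = (nrankings t)%:R.
Proof.
elim: t => [l|r a IHa b IHb] /=; first by rewrite big_nil.
rewrite cat_uniq mem_cat negb_or => /andP[/andP[ra rb] /and3P[ua /hasPn dab ub]].
rewrite big_cons eqxx big_cat /= !size_leaves coalescence_factor_bin !natrM -mulrA.
congr (_ * _); rewrite -IHa // -IHb //; congr (_ * _); apply: eq_big_seq => i.
  move=> ia; have [p ->] := child_sizes_in ia.
  by case: eqP ra => // ->; rewrite ia.
move=> ib; rewrite (child_sizes_notin (dab i ib)).
by case: eqP rb => // ->; rewrite ib.
Qed.

Lemma num_trees_ltiso n T g c : GKnC n T g ->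
  num_trees (fun g' => GKnC n T g' /\ ltiso g' g) c -> c = nrankings g.
Proof.
move=> [[Lg [Rg _]] Cg] [l [<- Pl pw cov]].
have uS := iota_uniq 1 n.-1.
have sizeS : size (iota 1 n.-1) = size (ranks g) by rewrite (perm_size Rg).
have uLg : uniq (leaves g) by rewrite (perm_uniq Lg) iota_uniq.
have [ul injl] := pairwise_nrel_uniq riso_refl riso_sym pw.
rewrite -(size_rankings sizeS); apply: (size_eq_up_to riso_sym riso_trans) => //.
- exact: rankings_uniq.
- move=> u v uin vin; have [_ _ Lu _ _] := rankings_sound uS sizeS uin.
  by have [_ _ Lv _ _] := rankings_sound uS sizeS vin; apply: riso_eq; rewrite Lu ?Lv.
- by move=> t /tree_inP/Pl[[[_ [Rt Ot]] _] It]; apply/hasP; apply: rankings_complete.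
move=> v vin; have [Rv Ov Lv Cv Iv] := rankings_sound uS sizeS vin.
have Pv : GKnC n T v /\ ltiso v g by rewrite /GKnC /ranked_labeled_tree /compatible Lv Cv.
by have [u /tree_inP uin vu] := cov v Pv; apply/hasP; exists u.
Qed.

Theorem proposition1 (n : nat) (T : ptree) (g : rtree) (c : nat) :
  (2 <= n)%N -> kingman_pp n T -> GKnC n T g ->
  num_trees (fun g' => GKnC n T g' /\ ltiso g' g) c ->
  (c%:R : rat) =
  \prod_(1 <= i < n)
     (let p := odflt (1%N, 1%N) (child_sizes i g) in
      ((p.1 + p.2 - 2)`!)%:R / (((p.1 - 1)`!)%:R * ((p.2 - 1)`!)%:R)).
Proof.
move=> _ _ Gg /(num_trees_ltiso Gg) ->; have [[_ [Rg _]] _] := Gg.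
rewrite -prod_coalescence_factor ?(perm_uniq Rg) ?iota_uniq //.
by apply: perm_big; rewrite /index_iota subn1.
Qed.
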